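(* Let $d\ge 2$ be an integer and for $x>0$ let $$\tau_d(x)=\frac{e^{-x}x^d}{d!},\qquad \varphi_d(x)=1-\tau_d(x)-\tau_d(x)\frac{(x-d)^2}{x}.$$ Then $\inf_{x>0}\varphi_d(x)>0$. *)

From Stdlib Require Import Reals Arith Factorial.
Open Scope R_scope.

Definition tau (d : nat) (x : R) : R := exp (- x) * x ^ d / INR (fact d).

Definition phi (d : nat) (x : R) : R :=
  1 - tau d x - tau d x * (x - INR d) ^ 2 / x.

Definition is_glb (E : R -> Prop) (m : R) : Prop :=
  (forall y, E y -> m <= y) /\ (forall b, (forall y, E y -> b <= y) -> b <= m).

(* For x > 0 we have phi_d(x) = 1 - G(x) with
     G(x) = e^{-x} x^{d-1} (x + (x-d)^2) / d!,
   and G'(x) = e^{-x} x^{d-2} (x-d)(x-a)(b-x) / d!, where a = d - sqrt d and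
   b = d + sqrt d are the roots of (x-d)^2 = d.  Hence G increases on [0,a],
   decreases on [a,d], increases on [d,b] and decreases on [b,oo), so
   G(x) <= G(a) or G(x) <= G(b).  At a critical value y (i.e. (y-d)^2 = d)
     G(y) = e^{-y} (y^{d-1}/(d-1)! + y^d/d!) <= e^{-y} (e^y - 1) = 1 - e^{-y},
   by truncating the exponential series.  As a < b this gives
   phi_d(x) >= e^{-b} > 0 for all x > 0, and a set of reals bounded below by
   e^{-b} has an infimum which is at least e^{-b}. *)

From Stdlib Require Import Reals Factorial Lra Psatz Lia.
From Coquelicot Require Import Coquelicot.
Open Scope R_scope.

Lemma le_of_derive_nonneg (f df : R -> R) (lo hi : R) : lo <= hi ->
  (forall x, lo <= x <= hi -> is_derive f x (df x)) ->
  (forall x, lo <= x <= hi -> 0 <= df x) -> f lo <= f hi.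
Proof.
  intros Hle Hder Hpos.
  destruct (MVT_gen f lo hi df) as [c [Hc Heq]].
  - intros x Hx. apply Hder.
    rewrite Rmin_left, Rmax_right in Hx by lra. lra.
  - intros x Hx. rewrite Rmin_left, Rmax_right in Hx by lra.
    apply continuity_pt_filterlim, (@ex_derive_continuous R_AbsRing R_NormedModule).
    exists (df x). now apply Hder.
  - rewrite Rmin_left, Rmax_right in Hc by lra.
    assert (0 <= df c * (hi - lo)) by (apply Rmult_le_pos; [apply Hpos|]; lra).
    lra.
Qed.

Lemma le_at_peak (f df : R -> R) (lo mid hi x : R) :
  (forall t, is_derive f t (df t)) ->
  (forall t, lo <= t <= mid -> 0 <= df t) ->
  (forall t, mid <= t <= hi -> df t <= 0) ->
  lo <= x <= hi -> f x <= f mid.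
Proof.
  intros Hder Hup Hdown Hx.
  destruct (Rle_lt_dec x mid) as [Hx_mid | Hmid_x].
  - apply (le_of_derive_nonneg f df); auto.
    intros t Ht. apply Hup. lra.
  - apply Ropp_le_cancel.
    apply (le_of_derive_nonneg (fun t => - f t) (fun t => - df t)); [lra | |].
    + intros t _. apply (is_derive_opp f t (df t)), Hder.
    + intros t Ht. enough (df t <= 0) by lra. apply Hdown. lra.
Qed.

Lemma cubic_sign (lo mid hi x : R) : lo <= mid <= hi ->
  (x <= lo -> 0 <= (x - mid) * (x - lo) * (hi - x)) /\
  (lo <= x <= mid -> (x - mid) * (x - lo) * (hi - x) <= 0) /\
  (mid <= x <= hi -> 0 <= (x - mid) * (x - lo) * (hi - x)) /\
  (hi <= x -> (x - mid) * (x - lo) * (hi - x) <= 0).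
Proof.
  intros Hord. repeat split; intros Hx.
  - apply Rmult_le_pos; [nra | lra].
  - assert (0 <= (mid - x) * (x - lo)) by nra. nra.
  - apply Rmult_le_pos; [nra | lra].
  - assert (0 <= (x - mid) * (x - lo)) by nra. nra.
Qed.

Lemma glb_of_lower_bound (E : R -> Prop) (c : R) :
  (exists y, E y) -> (forall y, E y -> c <= y) ->
  exists m, is_glb E m /\ c <= m.
Proof.
  intros [y0 Hy0] Hc.
  destruct (completeness (fun z => E (- z))) as [l [Hub Hleast]].
  - exists (- c). intros z Hz. specialize (Hc _ Hz). lra.
  - exists (- y0). now rewrite Ropp_involutive.
  - assert (Hlower : forall b, (forall y, E y -> b <= y) -> l <= - b).
    { intros b Hb. apply Hleast. intros z Hz. specialize (Hb _ Hz). lra. }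
    exists (- l). split; [split |].
    + intros y Hy. enough (- y <= l) by lra.
      apply Hub. now rewrite Ropp_involutive.
    + intros b Hb. specialize (Hlower b Hb). lra.
    + specialize (Hlower c Hc). lra.
Qed.

Lemma sum_f_R0_ge_first (u : nat -> R) (N : nat) :
  (forall k, 0 <= u k) -> u 0%nat <= sum_f_R0 u N.
Proof.
  intros Hu. induction N as [| N IH]; simpl; [lra |].
  specialize (Hu (S N)). lra.
Qed.

Lemma exp_ge_two_terms (k : nat) (y : R) : 0 <= y ->
  1 + y ^ S k / INR (fact (S k)) + y ^ S (S k) / INR (fact (S (S k))) <= exp y.
Proof.
  intros Hy.
  set (u := fun j => y ^ j / INR (fact j)).
  assert (Hu : forall j, 0 <= u j).
  { intros j. unfold u. apply Rdiv_le_0_compat; [now apply pow_le |].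
    apply lt_0_INR, lt_O_fact. }
  pose proof (exp_ge_taylor y (S (S k)) Hy) as Htaylor.
  fold u in Htaylor. rewrite !tech5 in Htaylor.
  pose proof (sum_f_R0_ge_first u k Hu) as Hfirst.
  assert (Hu0 : u 0%nat = 1) by (unfold u; simpl; field).
  change (1 + u (S k) + u (S (S k)) <= exp y). lra.
Qed.

Section PhiBound.

Variable n : nat.

Let D : R := INR (S (S n)).
Let F : R := INR (fact (S (S n))).
Let s : R := sqrt D.
Let a : R := D - s.
Let b : R := D + s.

Definition G (x : R) : R := exp (- x) * x ^ S n * (x + (x - D) ^ 2) / F.

Definition dG (x : R) : R := exp (- x) * x ^ n / F * ((x - D) * (x - a) * (b - x)).

Lemma F_pos : 0 < F.
Proof. apply lt_0_INR, lt_O_fact. Qed.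

Lemma D_eq : D = INR n + 2.
Proof. unfold D. rewrite !S_INR. ring. Qed.

Lemma s_facts : s * s = D /\ 1 < s /\ 0 < a.
Proof.
  assert (HD : 2 <= D) by (rewrite D_eq; pose proof (pos_INR n); lra).
  assert (Hss : s * s = D) by (apply sqrt_sqrt; lra).
  assert (0 <= s) by apply sqrt_pos.
  unfold a. repeat split; nra.
Qed.

(* G' = dG, using d - (x - d)^2 = (x - a)(b - x). *)
Lemma G_derive (x : R) : is_derive G x (dG x).
Proof.
  destruct s_facts as [Hss _].
  pose proof F_pos.
  unfold G, dG, a, b. auto_derive; [lra |].
  change (match n with 0%nat => 1 | S _ => INR n + 1 end) with (INR (S n)).
  rewrite S_INR.
  replace ((x - D) * (x - (D - s)) * (D + s - x))
    with ((x - D) * (D - (x - D) ^ 2)) by nra.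
  rewrite D_eq. field. lra.
Qed.

Lemma dG_sign (x : R) : 0 <= x ->
  (x <= a -> 0 <= dG x) /\ (a <= x <= D -> dG x <= 0) /\
  (D <= x <= b -> 0 <= dG x) /\ (b <= x -> dG x <= 0).
Proof.
  intros Hx. destruct s_facts as [_ [Hs _]].
  assert (Hc : 0 <= exp (- x) * x ^ n / F).
  { apply Rdiv_le_0_compat; [| exact F_pos].
    apply Rmult_le_pos; [apply Rlt_le, exp_pos | now apply pow_le]. }
  assert (Hab : a <= D <= b) by (unfold a, b; lra).
  destruct (cubic_sign a D b x Hab) as [H1 [H2 [H3 H4]]].
  unfold dG. set (c := exp (- x) * x ^ n / F) in *.
  set (w := (x - D) * (x - a) * (b - x)) in *.
  repeat split; intros Hrange;
    [specialize (H1 Hrange) | specialize (H2 Hrange) | specialize (H3 Hrange)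
    | specialize (H4 Hrange)]; nra.
Qed.

Lemma G_le_crit (x : R) : 0 < x -> G x <= G a \/ G x <= G b.
Proof.
  intros Hx. destruct s_facts as [_ [Hs Ha]].
  assert (Hab : a <= D <= b) by (unfold a, b; lra).
  destruct (Rle_lt_dec x D) as [HxD | HDx].
  - left. apply (le_at_peak G dG 0 a D); [exact G_derive | | | lra];
      intros t Ht; destruct (dG_sign t ltac:(lra)) as [Hinc1 [Hdec1 _]];
      first [apply Hinc1; lra | apply Hdec1; lra].
  - right. apply (le_at_peak G dG D b x); [exact G_derive | | | lra];
      intros t Ht; destruct (dG_sign t ltac:(lra)) as [_ [_ [Hinc2 Hdec2]]];
      first [apply Hinc2; lra | apply Hdec2; lra].
Qed.

(* At a critical point y, G y = e^{-y} (y^{d-1}/(d-1)! + y^d/d!) <= 1 - e^{-y}. *)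
Lemma G_crit_value (y : R) : 0 <= y -> (y - D) ^ 2 = D -> G y <= 1 - exp (- y).
Proof.
  intros Hy Hcrit.
  pose proof (exp_ge_two_terms n y Hy) as Hexp. fold F in Hexp.
  assert (HF : F = D * INR (fact (S n))) by (unfold F, D; apply mult_INR).
  assert (0 < INR (fact (S n))) by apply lt_0_INR, lt_O_fact.
  assert (HG : G y = exp (- y) * (y ^ S n / INR (fact (S n)) + y ^ S (S n) / F)).
  { unfold G. rewrite Hcrit, HF, D_eq. simpl pow. field.
    pose proof (pos_INR n). lra. }
  assert (Hinv : exp (- y) * exp y = 1) by (rewrite <- exp_plus, Rplus_opp_l; apply exp_0).
  pose proof (exp_pos (- y)). rewrite HG. nra.
Qed.

Lemma phi_eq_G (x : R) : 0 < x -> phi (S (S n)) x = 1 - G x.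
Proof.
  intros Hx. pose proof F_pos.
  unfold phi, tau, G. fold D F. simpl pow. field. lra.
Qed.

Lemma phi_ge_exp (x : R) : 0 < x -> exp (- b) <= phi (S (S n)) x.
Proof.
  intros Hx. destruct s_facts as [Hss [Hs Ha]].
  assert (Ha_crit : (a - D) ^ 2 = D) by (unfold a; rewrite <- Hss; ring).
  assert (Hb_crit : (b - D) ^ 2 = D) by (unfold b; rewrite <- Hss; ring).
  assert (Hexp_ab : exp (- b) <= exp (- a)) by (apply Rlt_le, exp_increasing; unfold a, b; lra).
  assert (Hb : 0 <= b) by (unfold b; nra).
  pose proof (G_crit_value a ltac:(lra) Ha_crit).
  pose proof (G_crit_value b Hb Hb_crit).
  rewrite phi_eq_G by exact Hx.
  destruct (G_le_crit x Hx); lra.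
Qed.

Lemma phi_lower_bound : exists c, 0 < c /\ forall x, 0 < x -> c <= phi (S (S n)) x.
Proof. exists (exp (- b)). split; [apply exp_pos | exact phi_ge_exp]. Qed.

End PhiBound.

Theorem lemma3p1 (d : nat) (hd : (2 <= d)%nat) :
  exists m : R, is_glb (fun y => exists x, 0 < x /\ y = phi d x) m /\ 0 < m.
Proof.
  destruct d as [| [| n]]; [lia | lia |].
  destruct (phi_lower_bound n) as [c [Hc Hbound]].
  destruct (glb_of_lower_bound (fun y => exists x, 0 < x /\ y = phi (S (S n)) x) c)
    as [m [Hglb Hcm]].
  - exists (phi (S (S n)) 1), 1. split; [lra | reflexivity].
  - intros y [x [Hx ->]]. now apply Hbound.
  - exists m. split; [exact Hglb | lra].
Qed.
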